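(* Let $k$ be an algebraically closed field and let $A$ be a finite dimensional $k$-algebra. If $A$ does not have a non-trivial grading, then $A$ is a basic algebra.
   Context: A grading on $A$ is a decomposition $A=\bigoplus_{i\in\mathbb{Z}}A_i$ into subspaces with $A_iA_j\subseteq A_{i+j}$ for all $i,j\in\mathbb{Z}$. The trivial grading is $A_0=A$ (all other components zero); a grading is non-trivial if $A_i\neq 0$ for some $i\neq 0$. Here ''$A$ has a non-trivial grading'' means there is a non-trivial grading on an algebra isomorphic to $A$. *)

From HB Require Import structures.
From mathcomp Require Import all_boot all_order all_algebra all_field.
Set Implicit Arguments. Unset Strict Implicit. Unset Printing Implicit Defensive.
Import GRing.Theory.
Local Open Scope ring_scope.

Section Defs.
Variables (k : fieldType) (A : falgType k).

(* A Z-grading of A: subspaces V i (i : int), only finitely many nonzero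
   (those outside the finite list s vanish; automatic in finite dimension),
   whose sum is direct and equal to A, with V i * V j <= V (i + j). *)
Definition is_grading (V : int -> {vspace A}) : Prop :=
  [/\ (exists s : seq int,
        [/\ uniq s, (forall i, i \notin s -> V i = 0%VS),
            (\sum_(i <- s) V i)%VS = fullv & directv (\sum_(i <- s) V i)]) &
   forall (i j : int) (x y : A), x \in V i -> y \in V j -> x * y \in V (i + j)].

Definition is_nontrivial_grading (V : int -> {vspace A}) : Prop :=
  is_grading V /\ exists i : int, i != 0 /\ V i != 0%VS.

Definition has_nontrivial_grading : Prop :=
  exists V : int -> {vspace A}, is_nontrivial_grading V.

Definition idempotent (e : A) : Prop := e * e = e.

Definition primitive_idempotent (e : A) : Prop :=
  [/\ idempotent e, e != 0 &
      forall f g : A, idempotent f -> idempotent g -> f * g = 0 -> g * f = 0 ->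
        e = f + g -> f = 0 \/ g = 0].

Definition complete_primitive_orthogonal (n : nat) (e : 'I_n -> A) : Prop :=
  [/\ forall i, primitive_idempotent (e i),
      forall i j, i != j -> e i * e j = 0 &
      \sum_(i < n) e i = 1].

Definition in_rideal (e u : A) : Prop := exists a : A, u = e * a.

Definition rmod_hom (e f : A) (h : A -> A) : Prop :=
  [/\ forall u, in_rideal e u -> in_rideal f (h u),
      forall u v, in_rideal e u -> in_rideal e v -> h (u + v) = h u + h v &
      forall u a, in_rideal e u -> h (u * a) = h u * a].

Definition rmod_iso (e f : A) : Prop :=
  exists h g : A -> A,
    [/\ rmod_hom e f h, rmod_hom f e g,
        forall u, in_rideal e u -> g (h u) = u &
        forall v, in_rideal f v -> h (g v) = v].

(* Basic algebra (Assem-Simson-Skowronski, Def. I.6.1): A_A = e_1 A + ... + e_n A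
   for a complete set of primitive orthogonal idempotents with e_i A, e_j A
   non-isomorphic for i <> j. *)
Definition basic_algebra : Prop :=
  exists (n : nat) (e : 'I_n -> A),
    complete_primitive_orthogonal e /\
    forall i j, i != j -> ~ rmod_iso (e i) (e j).

End Defs.

(* If an idempotent e and its complement f = 1 - e had eAf <> 0 or fAe <> 0,
   the Peirce decomposition A = (eAe + fAf) + eAf + fAe would be a grading in
   degrees 0, 1, -1 with a nonzero component of nonzero degree.  So without
   non-trivial gradings every idempotent is central.  Splitting 1 into
   primitive orthogonal idempotents e_i (by induction on dim e_i A), any
   module map e_i A -> e_j A sends e_i = e_i e_i to e_j b e_i = b e_j e_i = 0
   for i <> j, so the e_i A are pairwise non-isomorphic and A is basic. *)

From HB Require Import structures.
From mathcomp Require Import all_boot all_order all_algebra all_field.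
From Stdlib Require Import Classical.
Set Implicit Arguments.
Unset Strict Implicit.
Unset Printing Implicit Defensive.

Import GRing.Theory.
Local Open Scope ring_scope.

Lemma mem_limg_idem (k : fieldType) (vT : vectType k) (phi : 'End(vT)) v :
  (forall u, phi (phi u) = phi u) -> v \in limg phi <-> phi v = v.
Proof.
move=> phiK; split=> [/memv_imgP [u _ ->] | <-]; first exact: phiK.
exact: memv_img (memvf v).
Qed.

Section PeirceGrading.
Variables (k : fieldType) (A : falgType k) (e f : A).
Hypotheses (idem_e : e * e = e) (add_ef : e + f = 1).

Let def_f : f = 1 - e. Proof. by rewrite -add_ef [e + f]addrC addrK. Qed.
Let idem_f : f * f = f.
Proof. by rewrite def_f mulrBl mul1r mulrBr mulr1 idem_e subrr subr0. Qed.
Let mul_ef : e * f = 0. Proof. by rewrite def_f mulrBr mulr1 idem_e subrr. Qed.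
Let mul_fe : f * e = 0. Proof. by rewrite def_f mulrBl mul1r idem_e subrr. Qed.

Let mul_ee x : x * e * e = x * e. Proof. by rewrite -mulrA idem_e. Qed.
Let mul_ff x : x * f * f = x * f. Proof. by rewrite -mulrA idem_f. Qed.
Let mul_ef0 x : x * e * f = 0. Proof. by rewrite -mulrA mul_ef mulr0. Qed.
Let mul_fe0 x : x * f * e = 0. Proof. by rewrite -mulrA mul_fe mulr0. Qed.

Ltac peirce_simpl :=
  rewrite ?(mulrDl, mulrDr) ?mulrA
          ?(idem_e, idem_f, mul_ef, mul_fe, mul_ee, mul_ff, mul_ef0, mul_fe0,
            mulr0, mul0r, addr0, add0r).

Definition sandwich (x y : A) : 'End(A) := (amulr y \o amull x)%VF.

Lemma sandwichE x y a : sandwich x y a = x * a * y.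
Proof. by rewrite comp_lfunE !lfunE. Qed.

Definition peirce_diag := limg (sandwich e e + sandwich f f).
Definition peirce_ef := limg (sandwich e f).
Definition peirce_fe := limg (sandwich f e).

Lemma mem_peirce_diag z : z \in peirce_diag <-> e * z * e + f * z * f = z.
Proof.
rewrite -[X in _ <-> X + _ = _]sandwichE -[X in _ <-> _ + X = _]sandwichE.
rewrite -add_lfunE; apply: mem_limg_idem => u.
by rewrite !add_lfunE !sandwichE; peirce_simpl.
Qed.

Lemma mem_peirce_ef z : z \in peirce_ef <-> e * z * f = z.
Proof.
rewrite -sandwichE; apply: mem_limg_idem => u.
by rewrite !sandwichE; peirce_simpl.
Qed.

Lemma mem_peirce_fe z : z \in peirce_fe <-> f * z * e = z.
Proof.
rewrite -sandwichE; apply: mem_limg_idem => u.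
by rewrite !sandwichE; peirce_simpl.
Qed.

Definition peirce_grading (i : int) : {vspace A} :=
  if i == 0 then peirce_diag else if i == 1 then peirce_ef
  else if i == -1 then peirce_fe else 0%VS.

Lemma mem_peirce_gradingP i z : z \in peirce_grading i ->
  [\/ i = 0 /\ e * z * e + f * z * f = z, i = 1 /\ e * z * f = z,
      i = -1 /\ f * z * e = z | z = 0].
Proof.
rewrite /peirce_grading.
case: eqP => [-> /mem_peirce_diag | _]; first by constructor 1.
case: eqP => [-> /mem_peirce_ef | _]; first by constructor 2.
case: eqP => [-> /mem_peirce_fe | _]; first by constructor 3.
by rewrite memv0 => /eqP; constructor 4.
Qed.

Lemma peirce_grading_mul i j x y :
  x \in peirce_grading i -> y \in peirce_grading j ->
  x * y \in peirce_grading (i + j).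
Proof.
case/mem_peirce_gradingP=> [[-> <-]|[-> <-]|[-> <-]|->];
  last by rewrite mul0r mem0v.
all: case/mem_peirce_gradingP=> [[-> <-]|[-> <-]|[-> <-]|->];
  last by rewrite mulr0 mem0v.
all: rewrite /peirce_grading /=; peirce_simpl; rewrite ?mem0v //.
all: first [apply/mem_peirce_diag | apply/mem_peirce_ef | apply/mem_peirce_fe].
all: by peirce_simpl.
Qed.

Let peirce_decomposition u :
  (e * u * e + f * u * f) + (e * u * f + f * u * e) = u.
Proof.
rewrite -[RHS]mul1r -[RHS]mulr1 -add_ef !(mulrDl, mulrDr).
by rewrite addrACA [RHS]addrACA [f * u * f + _]addrC.
Qed.

Lemma peirce_sum_full : (peirce_diag + (peirce_ef + peirce_fe))%VS = fullv.
Proof.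
apply/eqP; rewrite eqEsubv subvf; apply/subvP => u _.
rewrite -(peirce_decomposition u); apply: memv_add.
  by apply/mem_peirce_diag; peirce_simpl.
by apply: memv_add; [apply/mem_peirce_ef | apply/mem_peirce_fe]; peirce_simpl.
Qed.

Lemma peirce_sum_direct : directv (peirce_diag + (peirce_ef + peirce_fe)).
Proof.
rewrite directv_addE /=; apply/and3P; split; first exact: directv_trivial.
  apply/directv_addP/eqP; rewrite -subv0; apply/subvP => u.
  case/memv_capP=> [/mem_peirce_ef <- /mem_peirce_fe u_fe].
  by rewrite memv0 -{1}u_fe; peirce_simpl.
rewrite -subv0; apply/subvP => u /memv_capP [/mem_peirce_diag u_diag].
case/memv_addP=> [v /mem_peirce_ef v_ef [w /mem_peirce_fe w_fe u_vw]].
rewrite memv0 u_vw.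
have <- : e * u * f = v by rewrite u_vw -v_ef -w_fe; peirce_simpl.
have <- : f * u * e = w by rewrite u_vw -v_ef -w_fe; peirce_simpl.
by rewrite -u_diag; peirce_simpl.
Qed.

Lemma peirce_grading_is_grading : is_grading peirce_grading.
Proof.
split; last exact: peirce_grading_mul.
exists [:: 0; 1; -1]; split=> //.
- by move=> i; rewrite !inE /peirce_grading; do 3 case: eqP => //.
- by rewrite !big_cons big_nil addv0; exact: peirce_sum_full.
- move: peirce_sum_direct.
  by rewrite !directvE /= !big_cons !big_nil addv0 addn0.
Qed.

Let peirce_grading_nontrivial i z :
  i != 0 -> z \in peirce_grading i -> z != 0 -> has_nontrivial_grading A.
Proof.
move=> i_neq0 z_i z_neq0; exists peirce_grading; split.
  exact: peirce_grading_is_grading.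
by exists i; split=> //; apply: contraNneq z_neq0 => Vi0; rewrite -memv0 -Vi0.
Qed.

Lemma offdiag_peirce_eq0 :
  ~ has_nontrivial_grading A -> forall a, e * a * f = 0 /\ f * a * e = 0.
Proof.
move=> no_grading a; split; apply/eqP/contraT => offdiag_neq0; case: no_grading.
  apply: (@peirce_grading_nontrivial 1 _ _ _ offdiag_neq0) => //.
  by apply/mem_peirce_ef; peirce_simpl.
apply: (@peirce_grading_nontrivial (-1) _ _ _ offdiag_neq0) => //.
by apply/mem_peirce_fe; peirce_simpl.
Qed.
End PeirceGrading.

Lemma idempotent_central (k : fieldType) (A : falgType k) :
  ~ has_nontrivial_grading A -> forall e a : A, e * e = e -> e * a = a * e.
Proof.
move=> no_grading e a idem_e.
have add_e : e + (1 - e) = 1 by rewrite addrC subrK.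
have [eaf fae] := offdiag_peirce_eq0 idem_e add_e no_grading a.
have -> : e * a = e * a * e by rewrite -{1}[e * a]mulr1 -add_e mulrDr eaf addr0.
by rewrite -{1}[a * e]mul1r -add_e mulrA mulrDl mulrDl fae addr0.
Qed.

Section PrimitiveDecomposition.
Variables (k : fieldType) (A : falgType k).

Definition orthogonal : rel A := fun x y => (x * y == 0) && (y * x == 0).

Definition primitive_decomposition (e : A) (s : seq A) : Prop :=
  [/\ {in s, forall x, primitive_idempotent x},
      {in s, forall x, x * e = x /\ e * x = x},
      pairwise orthogonal s & \sum_(x <- s) x = e].

Definition rideal (e : A) : {vspace A} := limg (amull e).

Lemma mem_rideal e a : e * a \in rideal e.
Proof. by have := memv_img (amull e) (memvf a); rewrite lfunE. Qed.

Lemma ltn_dim_rideal e f g : f * f = f -> g * g = g -> f * g = 0 -> g * f = 0 ->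
  e = f + g -> g != 0 -> (\dim (rideal f) < \dim (rideal e))%N.
Proof.
move=> idem_f idem_g fg0 gf0 def_e g_neq0.
have ef : e * f = f by rewrite def_e mulrDl idem_f gf0 addr0.
have eg : e * g = g by rewrite def_e mulrDl idem_g fg0 add0r.
have sub_f : (rideal f <= rideal e)%VS.
  apply/subvP => _ /memv_imgP [a _ ->].
  by rewrite lfunE /= -ef -mulrA mem_rideal.
rewrite (ltn_leqif (dimv_leqif_sup sub_f)); apply/negP => /subvP sub_e.
have /sub_e /memv_imgP [a _] := mem_rideal e g.
rewrite eg lfunE /= => g_fa.
by move: g_neq0; rewrite -idem_g {2}g_fa mulrA gf0 mul0r eqxx.
Qed.

Lemma primitive_decomposition0 : primitive_decomposition 0 [::].
Proof. by split=> //; rewrite big_nil. Qed.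

Lemma primitive_decomposition1 e :
  primitive_idempotent e -> primitive_decomposition e [:: e].
Proof.
move=> prim_e; have [idem_e _ _] := prim_e.
by split=> [x | x | | ]; rewrite ?big_seq1 // inE => /eqP ->.
Qed.

Lemma primitive_decompositionD f g sf sg :
  f * g = 0 -> g * f = 0 -> primitive_decomposition f sf ->
  primitive_decomposition g sg -> primitive_decomposition (f + g) (sf ++ sg).
Proof.
move=> fg0 gf0 [prim_f in_f orth_f sum_f] [prim_g in_g orth_g sum_g].
have absorbD h h' x : h * h' = 0 -> h' * h = 0 -> x * h = x /\ h * x = x ->
    x * (h + h') = x /\ (h + h') * x = x.
  move=> hh' h'h [xh hx]; split.
    by rewrite mulrDr -[X in X * h']xh -mulrA hh' mulr0 addr0 xh.
  by rewrite mulrDl -[X in h' * X]hx mulrA h'h mul0r addr0 hx.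
split.
- by move=> x; rewrite mem_cat => /orP [/prim_f | /prim_g].
- move=> x; rewrite mem_cat => /orP [/in_f | /in_g]; first exact: absorbD.
  by rewrite addrC; apply: absorbD.
- rewrite pairwise_cat orth_f orth_g !andbT; apply/allrelP => p q.
  case/in_f=> [pf fp] /in_g [qg gq]; apply/andP; split; apply/eqP.
    by rewrite -pf -gq -mulrA (mulrA f) fg0 mul0r mulr0.
  by rewrite -qg -fp -mulrA (mulrA g) gf0 mul0r mulr0.
- by rewrite big_cat /= sum_f sum_g.
Qed.

Lemma not_primitive_idempotent_split (e : A) :
  e * e = e -> e != 0 -> ~ primitive_idempotent e ->
  exists f g, [/\ f * f = f, g * g = g, f * g = 0, g * f = 0 & e = f + g]
              /\ f != 0 /\ g != 0.
Proof.
move=> idem_e e_neq0 not_prim; apply: NNPP => no_split; apply: not_prim.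
split=> // f g idem_f idem_g fg0 gf0 def_e; apply: NNPP.
by case/not_or_and=> /eqP f_neq0 /eqP g_neq0; apply: no_split; exists f, g.
Qed.

Lemma primitive_decomposition_exists (e : A) :
  e * e = e -> exists s, primitive_decomposition e s.
Proof.
have [n] := ubnP (\dim (rideal e)); elim: n e => // n IH e dim_e idem_e.
have [-> | e_neq0] := eqVneq e 0.
  by exists [::]; exact: primitive_decomposition0.
have [prim_e | not_prim] := classic (primitive_idempotent e).
  by exists [:: e]; exact: primitive_decomposition1.
have [f [g [[idem_f idem_g fg0 gf0 def_e] [f_neq0 g_neq0]]]] :=
  not_primitive_idempotent_split idem_e e_neq0 not_prim.
have [|sf dec_f] := IH f _ idem_f.
  by rewrite -ltnS (leq_trans _ dim_e) // ltnS (ltn_dim_rideal idem_f idem_g).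
have [|sg dec_g] := IH g _ idem_g.
  rewrite addrC in def_e.
  by rewrite -ltnS (leq_trans _ dim_e) // ltnS (ltn_dim_rideal idem_g idem_f).
by exists (sf ++ sg); rewrite def_e; exact: primitive_decompositionD.
Qed.

Lemma orthogonal_nth (s : seq A) : pairwise orthogonal s ->
  forall i j : 'I_(size s), i != j -> s`_i * s`_j = 0.
Proof.
move=> /pairwiseP orth_s i j; rewrite neq_ltn => /orP [] lt_ij.
  by have /andP [/eqP] := orth_s 0 i j (ltn_ord i) (ltn_ord j) lt_ij.
by have /andP [_ /eqP] := orth_s 0 j i (ltn_ord j) (ltn_ord i) lt_ij.
Qed.
End PrimitiveDecomposition.

Section RightIdealIsomorphism.
Variables (k : fieldType) (A : falgType k).

Lemma rmod_hom0 (e f : A) h : rmod_hom e f h -> h 0 = 0.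
Proof.
case=> _ hD _; have e0 : in_rideal e 0 by exists 0; rewrite mulr0.
move: (hD 0 0 e0 e0); rewrite addr0 => /(congr1 (fun x => x - h 0)).
by rewrite subrr addrK.
Qed.

Lemma rmod_hom_central_eq0 (e f : A) h : e * e = e -> f * e = 0 ->
  (forall a, f * a = a * f) -> rmod_hom e f h -> h e = 0.
Proof.
move=> idem_e fe0 f_central [h_to _ hM].
have e_e : in_rideal e e by exists e.
have [b heb] := h_to e e_e.
by rewrite -{1}idem_e hM // heb f_central -mulrA fe0 mulr0.
Qed.

Lemma not_rmod_iso_central (e f : A) : e * e = e -> e != 0 -> f * e = 0 ->
  (forall a, f * a = a * f) -> ~ rmod_iso e f.
Proof.
move=> idem_e e_neq0 fe0 f_central [h [g [hom_h hom_g ghK _]]].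
have e_e : in_rideal e e by exists e.
move: e_neq0; rewrite -(ghK e e_e).
by rewrite (rmod_hom_central_eq0 idem_e fe0 f_central hom_h) (rmod_hom0 hom_g) eqxx.
Qed.
End RightIdealIsomorphism.

Theorem mainTheorem1 (k : closedFieldType) (A : falgType k) :
  ~ has_nontrivial_grading A -> basic_algebra A.
Proof.
move=> no_grading; have central := idempotent_central no_grading.
have [s [prim_s _ orth_s sum_s]] :=
  primitive_decomposition_exists (mulr1 (1 : A)).
have prim_nth (i : 'I_(size s)) : primitive_idempotent s`_i.
  by apply/prim_s/mem_nth.
exists (size s), (nth 0 s); split.
  split=> //; first exact: orthogonal_nth.
  by rewrite -sum_s (big_nth 0) big_mkord.
move=> i j neq_ij.
have [[idem_i nz_i _] [idem_j _ _]] := (prim_nth i, prim_nth j).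
apply: not_rmod_iso_central => //; last by move=> a; exact: central.
by apply: (orthogonal_nth orth_s); rewrite eq_sym.
Qed.
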